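(* Let $s_1,\dots,s_n>0$, $S=\sum_{j=1}^n s_j$, $s_0>0$, and $I_1=\{j\in[n]: s_j>s_0\}$. Let $k\ge1$ and draw indices $\pi(1),\dots,\pi(k)\in[n]$ i.i.d., each equal to $j$ with probability $p_j=s_j/S$; assign to the $i$-th draw the weight $w_i=\frac{1}{k\,p_{\pi(i)}}$. Then with probability at least $1-\frac1k$, $$\sum_{i\in[k]:\,\pi(i)\in I_1}w_i\le\frac{2S}{s_0}.$$ *)

(* discrete probability over the finite sample space of
   index sequences pi : 'I_k -> 'I_n, with the i.i.d. product law. *)
From HB Require Import structures.
From mathcomp Require Import all_boot all_order all_algebra.
Set Implicit Arguments. Unset Strict Implicit. Unset Printing Implicit Defensive.
Import Order.TTheory GRing.Theory Num.Theory.
Local Open Scope ring_scope.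

Section Sampling.
Variables (R : realFieldType) (n : nat) (s : 'I_n -> R).

Definition Stot : R := \sum_(j < n) s j.

Definition pr (j : 'I_n) : R := s j / Stot.

Definition seq_prob (k : nat) (pi : {ffun 'I_k -> 'I_n}) : R :=
  \prod_(i < k) pr (pi i).

Definition Prob (k : nat) (E : pred {ffun 'I_k -> 'I_n}) : R :=
  \sum_(pi | E pi) seq_prob pi.

Definition wt (k : nat) (pi : {ffun 'I_k -> 'I_n}) (i : 'I_k) : R :=
  1 / (k%:R * pr (pi i)).

Definition I1 (s0 : R) : pred 'I_n := fun j => s0 < s j.

End Sampling.

(** Let [X] be the total weight of the heavy draws.  Each draw contributes
    [1/k] to [E X] for every heavy index, so [E X = #|I1| <= S/s0]; its
    second moment per draw is [(1/k^2) sum_(j in I1) S/s_j <= (S/s0)^2/k^2],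
    so [Var X <= (S/s0)^2/k].  Chebyshev's inequality at distance [S/s0]
    from the mean then bounds the probability of [X > 2 S/s0] by [1/k]. *)

From HB Require Import structures.
From mathcomp Require Import all_boot all_order all_algebra.
From mathcomp Require Import ring lra.
Set Implicit Arguments. Unset Strict Implicit. Unset Printing Implicit Defensive.
Import Order.TTheory GRing.Theory Num.Theory.
Local Open Scope ring_scope.

Lemma markov_sq_sum (R : realFieldType) (U : finType) (q X : U -> R)
    (E : pred U) (a : R) :
  (forall u, 0 <= q u) -> 0 < a -> (forall u, E u -> a <= X u) ->
  \sum_(u | E u) q u <= (\sum_u q u * X u ^+ 2) / a ^+ 2.
Proof.
move=> q_ge0 a_gt0 EX; have a2_gt0 : 0 < a ^+ 2 by rewrite exprn_gt0.
rewrite mulr_suml big_mkcond; apply: ler_sum => u _.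
have qX_ge0 : 0 <= q u * X u ^+ 2 / a ^+ 2.
  by rewrite divr_ge0 ?(mulr_ge0 (q_ge0 u) (sqr_ge0 _)) ?ltW.
case: ifP => // /EX aX; rewrite ler_pdivlMr // ler_wpM2l //.
have X_gt0 := lt_le_trans a_gt0 aX.
by rewrite lerXn2r ?nnegrE // ltW.
Qed.

Section IIDProduct.
Variables (R : realFieldType) (T : finType) (p : T -> R).

Definition mean (f : T -> R) : R := \sum_j p j * f j.

Hypothesis p_sum1 : \sum_j p j = 1.

Lemma mean1 : mean (fun=> 1) = 1.
Proof. by rewrite /mean; under eq_bigr do rewrite mulr1. Qed.

Lemma mean_centered_sq (f : T -> R) :
  mean (fun j => (f j - mean f) ^+ 2) = mean (fun j => f j ^+ 2) - mean f ^+ 2.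
Proof.
have expand j : p j * (f j - mean f) ^+ 2
    = p j * f j ^+ 2 - 2 * mean f * (p j * f j) + mean f ^+ 2 * p j.
  by ring.
rewrite /mean (eq_bigr _ (fun j _ => expand j)) big_split sumrB /=.
by rewrite -!mulr_sumr p_sum1 -/(mean f); ring.
Qed.

Lemma mean_centered (f : T -> R) : mean (fun j => f j - mean f) = 0.
Proof.
rewrite /mean; under eq_bigr do rewrite mulrBr.
by rewrite sumrB -mulr_suml p_sum1 mul1r subrr.
Qed.

Variable k : nat.

Lemma sum_iid_prod (F : 'I_k -> T -> R) :
  \sum_(pi : {ffun 'I_k -> T}) \prod_i p (pi i) * \prod_i F i (pi i)
  = \prod_i mean (F i).
Proof. by rewrite bigA_distr_bigA; apply: eq_bigr => pi _; rewrite -big_split. Qed.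

Lemma sum_iid_prod_on (A : pred 'I_k) (F : 'I_k -> T -> R) :
  \sum_(pi : {ffun 'I_k -> T}) \prod_i p (pi i) * \prod_(i | A i) F i (pi i)
  = \prod_(i | A i) mean (F i).
Proof.
transitivity (\prod_i mean (fun j => if A i then F i j else 1)); last first.
  by rewrite [RHS]big_mkcond; apply: eq_bigr => i _; case: (A i); rewrite ?mean1.
rewrite -sum_iid_prod; apply: eq_bigr => pi _; congr (_ * _); exact: big_mkcond.
Qed.

Lemma sum_iid_prob : \sum_(pi : {ffun 'I_k -> T}) \prod_i p (pi i) = 1.
Proof.
by rewrite -(bigA_distr_bigA (fun _ j => p j)) big1 // => i _; exact: p_sum1.
Qed.

Lemma mean_iid_coord (g : T -> R) (a : 'I_k) :
  \sum_(pi : {ffun 'I_k -> T}) \prod_i p (pi i) * g (pi a) = mean g.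
Proof.
have := sum_iid_prod_on (pred1 a) (fun _ => g).
by rewrite big_pred1_eq; under eq_bigr do rewrite big_pred1_eq.
Qed.

Lemma mean_iid_coord2 (g : T -> R) (a b : 'I_k) : a != b ->
  \sum_(pi : {ffun 'I_k -> T}) \prod_i p (pi i) * (g (pi a) * g (pi b))
  = mean g ^+ 2.
Proof.
move=> neq_ab.
have prod_ab (G : 'I_k -> R) : \prod_(i | pred2 a b i) G i = G a * G b.
  rewrite (bigD1 a) /= ?eqxx //; congr (_ * _); apply: big_pred1 => i /=.
  by case: eqVneq => [->|_] /=; rewrite ?(negbTE neq_ab) ?andbT.
have := sum_iid_prod_on (pred2 a b) (fun _ => g).
by rewrite prod_ab expr2; under eq_bigr do rewrite prod_ab.
Qed.

Lemma mean_iid_sum_sq (g : T -> R) : mean g = 0 ->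
  \sum_(pi : {ffun 'I_k -> T}) \prod_i p (pi i) * (\sum_i g (pi i)) ^+ 2
  = k%:R * mean (fun j => g j ^+ 2).
Proof.
move=> g_centered.
under eq_bigr do rewrite expr2 mulr_suml mulr_sumr; rewrite exchange_big /=.
rewrite mulr_natl -[X in _ *+ X]card_ord -sumr_const; apply: eq_bigr => a _.
under eq_bigr do rewrite !mulr_sumr; rewrite exchange_big /= (bigD1 a) //=.
rewrite [X in _ + X]big1 ?addr0 => [|b ne_ba].
  exact: mean_iid_coord (fun j => g j ^+ 2) a.
have ne_ab : a != b by rewrite eq_sym.
by rewrite mean_iid_coord2 // g_centered expr0n.
Qed.

End IIDProduct.

Section HeavyDraws.
Variables (R : realFieldType) (n : nat) (s : 'I_n -> R) (s0 : R) (k : nat).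
Hypotheses (hn : (0 < n)%N) (hs : forall j, 0 < s j) (hs0 : 0 < s0).
Hypothesis hk : (1 <= k)%N.

Lemma Stot_gt0 : 0 < Stot s.
Proof.
rewrite /Stot (bigD1 (Ordinal hn)) //= ltr_wpDr // sumr_ge0 // => j _.
exact: ltW.
Qed.

Lemma pr_gt0 j : 0 < pr s j.
Proof. by rewrite divr_gt0 ?Stot_gt0. Qed.

Lemma pr_sum1 : \sum_j pr s j = 1.
Proof. by rewrite -mulr_suml divff // gt_eqF // Stot_gt0. Qed.

Lemma seq_prob_ge0 (pi : {ffun 'I_k -> 'I_n}) : 0 <= seq_prob s pi.
Proof. by apply: prodr_ge0 => i _; exact/ltW/pr_gt0. Qed.

Lemma card_I1_le : #|I1 s s0|%:R <= Stot s / s0.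
Proof.
rewrite ler_pdivlMr // mulr_natl -sumr_const.
apply: (le_trans (y := \sum_(j in I1 s s0) s j)).
  by apply: ler_sum => j /ltW.
rewrite [leRHS](bigID (fun j => j \in I1 s s0)) /= lerDl sumr_ge0 // => j _.
exact: ltW.
Qed.

Definition heavy_wt (j : 'I_n) : R :=
  if I1 s s0 j then 1 / (k%:R * pr s j) else 0.

Lemma sum_wt_heavy (pi : {ffun 'I_k -> 'I_n}) :
  \sum_(i < k | I1 s s0 (pi i)) wt s pi i = \sum_i heavy_wt (pi i).
Proof. by rewrite big_mkcond. Qed.

Lemma k_gt0 : 0 < k%:R :> R.
Proof. by rewrite ltr0n. Qed.

Lemma mean_heavy_wt : k%:R * mean (pr s) heavy_wt = #|I1 s s0|%:R.
Proof.
rewrite /mean mulr_sumr -sumr_const [RHS]big_mkcond; apply: eq_bigr => j _.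
rewrite /heavy_wt /I1 unfold_in; case: ifP => _; last by rewrite !mulr0.
by rewrite mulrA div1r mulfV // mulf_neq0 // gt_eqF ?k_gt0 ?pr_gt0.
Qed.

Lemma mean_heavy_wt_sq :
  k%:R ^+ 2 * mean (pr s) (fun j => heavy_wt j ^+ 2) <= (Stot s / s0) ^+ 2.
Proof.
apply: (le_trans (y := #|I1 s s0|%:R * (Stot s / s0))); last first.
  by rewrite expr2 ler_wpM2r ?card_I1_le ?divr_ge0 ?ltW ?Stot_gt0.
rewrite /mean mulr_sumr -sumr_const mulr_suml [leRHS]big_mkcond.
apply: ler_sum => j _.
rewrite /heavy_wt /I1 unfold_in; case: ifP => [heavy|_]; last by rewrite expr0n !mulr0.
have sj_gt0 := hs j; have S_gt0 := Stot_gt0; have k_pos := k_gt0.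
have -> : k%:R ^+ 2 * (pr s j * (1 / (k%:R * pr s j)) ^+ 2) = Stot s / s j.
  by rewrite /pr; field; rewrite !gt_eqF.
by rewrite mul1r ler_pM2l // lef_pV2 ?posrE // ltW.
Qed.

Lemma var_sum_heavy_wt :
  \sum_(pi : {ffun 'I_k -> 'I_n})
     seq_prob s pi * (\sum_i (heavy_wt (pi i) - mean (pr s) heavy_wt)) ^+ 2
  <= (Stot s / s0) ^+ 2 / k%:R.
Proof.
pose g j := heavy_wt j - mean (pr s) heavy_wt.
rewrite (@mean_iid_sum_sq _ _ _ pr_sum1 k g) /g ?mean_centered ?pr_sum1 //.
rewrite mean_centered_sq ?pr_sum1 // ler_pdivlMr ?k_gt0 //.
have := mean_heavy_wt_sq; have := k_gt0; nra.
Qed.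

End HeavyDraws.

Theorem lemma14 (R : realFieldType) (n : nat) (s : 'I_n -> R) (s0 : R) (k : nat)
  (hn : (0 < n)%N) (hs : forall j, 0 < s j) (hs0 : 0 < s0) (hk : (1 <= k)%N) :
  1 - 1 / k%:R <=
  Prob s (fun pi : {ffun 'I_k -> 'I_n} =>
            \sum_(i < k | I1 s s0 (pi i)) wt s pi i <= 2 * Stot s / s0).
Proof.
set a := Stot s / s0; set m := mean (pr s) (heavy_wt s s0 k).
have a_gt0 : 0 < a by rewrite divr_gt0 ?Stot_gt0.
have km_le_a : k%:R * m <= a by rewrite mean_heavy_wt ?card_I1_le.
pose Y (pi : {ffun 'I_k -> 'I_n}) := \sum_i (heavy_wt s s0 k (pi i) - m).
set good := (fun pi => _); rewrite /Prob.
have bad_Y pi : ~~ good pi -> a <= Y pi.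
  rewrite /good sum_wt_heavy -ltNge -mulrA -/a /Y sumrB sumr_const card_ord.
  rewrite -mulr_natl; lra.
have bad_le : \sum_(pi | ~~ good pi) seq_prob s pi <= 1 / k%:R.
  apply: le_trans (markov_sq_sum (seq_prob_ge0 hn hs) a_gt0 bad_Y) _.
  rewrite ler_pdivrMr ?exprn_gt0 // div1r [leRHS]mulrC.
  exact: var_sum_heavy_wt.
have := sum_iid_prob (pr_sum1 hn hs) k; rewrite (bigID good) /=; lra.
Qed.
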